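(* Let $M=(S,\Sigma,\delta,s_0,F)$ be a deterministic finite automaton, let $T\ge 1$ be an integer, and for each $s\in S$ let $P(\cdot\mid s)$ and $Q(\cdot\mid s)$ be probability distributions on $\Sigma$. Define distributions $P$ and $Q$ on $\Sigma^T$ by $P(x)=\prod_{t=1}^T P(\sigma_t\mid s_t)$ and $Q(x)=\prod_{t=1}^T Q(\sigma_t\mid s_t)$ for $x=\sigma_1\cdots\sigma_T$, where $s_1\cdots s_{T+1}$ is the state sequence induced by $x$, and let $f^*(x)=\mathbb{1}(s_{T+1}\in F)$. Define $P_t$ on $S$ by $P_1(s')=\mathbb{1}(s'=s_0)$ and $P_t(s')=\mathbb{P}_{s\sim P_{t-1},\sigma\sim P(\cdot\mid s)}[s'=\delta(s,\sigma)]$ for $t\ge2$, and $P_t(s,\sigma)=P_t(s)P(\sigma\mid s)$. Let $\hat g:S\times\Sigma\to S$ and $\hat h:S\to\{0,1\}$ be arbitrary functions, and define $\hat f:\Sigma^T\to\{0,1\}$ by $\hat f(\sigma_1\cdots\sigma_T)=\hat h(\hat s_{T+1})$, where $\hat s_1=s_0$ and $\hat s_{t+1}=\hat g(\hat s_t,\sigma_t)$. Let $\epsilon=\max_{s\in S}\mathrm{TV}(P(\sigma\mid s),Q(\sigma\mid s))$ and $$\tilde L_P(\hat f)=\sum_{t=1}^T L_{P_t}(\hat g)+L_{P_{T+1}}(\hat h).$$ Then $$L_Q(\hat f)\le \tilde L_P(\hat f)+2T^2\epsilon.$$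
   Context: A deterministic finite automaton $M=(S,\Sigma,\delta,s_0,F)$ has a finite state set $S$, a finite alphabet $\Sigma$, a transition function $\delta:S\times\Sigma\to S$, an initial state $s_0\in S$ and final states $F\subseteq S$. For $x=\sigma_1\cdots\sigma_T$, the induced state sequence is $s_1=s_0$, $s_{t+1}=\delta(s_t,\sigma_t)$. Losses: $L_Q(\hat f)=\mathbb{P}_{x\sim Q}[\hat f(x)\neq f^*(x)]$; $L_{P_t}(\hat g)=\mathbb{P}_{(s,\sigma)\sim P_t(s,\sigma)}[\hat g(s,\sigma)\neq\delta(s,\sigma)]$; $L_{P_{T+1}}(\hat h)=\mathbb{P}_{s\sim P_{T+1}}[\hat h(s)\neq\mathbb{1}(s\in F)]$. The total variation distance is defined without the factor $1/2$: $\mathrm{TV}(\mu,\nu)=\sum_a|\mu(a)-\nu(a)|$. *)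

From HB Require Import structures.
From mathcomp Require Import all_boot all_order all_algebra.
Set Implicit Arguments. Unset Strict Implicit. Unset Printing Implicit Defensive.
Import Order.TTheory GRing.Theory Num.Theory.
Local Open Scope ring_scope.

Section DFA.
Variables (R : realFieldType) (S Sigma : finType).
Variables (delta : S -> Sigma -> S) (s0 : S) (F : {set S}).

Definition is_cond_dist (K : S -> Sigma -> R) : Prop :=
  forall s, (forall a, 0 <= K s a) /\ \sum_(a : Sigma) K s a = 1.

Definition run (g : S -> Sigma -> S) (s : S) (x : seq Sigma) : S := foldl g s x.

Fixpoint word_prob (K : S -> Sigma -> R) (s : S) (x : seq Sigma) : R :=
  match x with
  | [::] => 1
  | a :: x' => K s a * word_prob K (delta s a) x'
  end.

Definition fstar (x : seq Sigma) : bool := run delta s0 x \in F.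

Definition fhat (g : S -> Sigma -> S) (h : S -> bool) (x : seq Sigma) : bool :=
  h (run g s0 x).

Definition loss_seq (T : nat) (K : S -> Sigma -> R) (f : seq Sigma -> bool) : R :=
  \sum_(x : T.-tuple Sigma) word_prob K s0 x * (f x != fstar x)%:R.

(* state_dist K n = P_{n+1} of the paper:
   P_1 = indicator of s0, P_{t}(s') = sum_{s,sigma} P_{t-1}(s) K(sigma|s) 1(s' = delta s sigma) *)
Fixpoint state_dist (K : S -> Sigma -> R) (n : nat) : S -> R :=
  match n with
  | 0 => fun s' => (s' == s0)%:R
  | n'.+1 => fun s' =>
      \sum_(s : S) \sum_(a : Sigma) state_dist K n' s * K s a * (s' == delta s a)%:R
  end.

Definition loss_trans (K : S -> Sigma -> R) (t : nat) (g : S -> Sigma -> S) : R :=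
  \sum_(s : S) \sum_(a : Sigma)
     state_dist K t.-1 s * K s a * (g s a != delta s a)%:R.

Definition loss_final (K : S -> Sigma -> R) (t : nat) (h : S -> bool) : R :=
  \sum_(s : S) state_dist K t.-1 s * (h s != (s \in F))%:R.

Definition tilde_loss (K : S -> Sigma -> R) (T : nat) (g : S -> Sigma -> S)
  (h : S -> bool) : R :=
  \sum_(1 <= t < T.+1) loss_trans K t g + loss_final K T.+1 h.

End DFA.

(* total variation WITHOUT the factor 1/2 *)
Definition TV (R : realFieldType) (Sigma : finType) (mu nu : Sigma -> R) : R :=
  \sum_(a : Sigma) `|mu a - nu a|.

(* epsilon = max_s TV(P(.|s), Q(.|s)) (TV >= 0, so 0 is a neutral start) *)
Definition eps_max (R : realFieldType) (S Sigma : finType) (P Q : S -> Sigma -> R) : R :=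
  \big[Num.max/0]_(s : S) TV (P s) (Q s).

From mathcomp Require Import all_boot all_order all_algebra.
From mathcomp Require Import lra.
Set Implicit Arguments.
Unset Strict Implicit.
Unset Printing Implicit Defensive.
Import Order.TTheory GRing.Theory Num.Theory.
Local Open Scope ring_scope.

(* Swapping Q for P one letter at a
   time costs at most epsilon per letter, because the conditional expectations
   of a [0,1]-valued function under P(.|s) and Q(.|s) differ by at most their
   TV distance; this costs T epsilon <= 2 T^2 epsilon.  Under P, a first-step
   analysis gives the union bound: if ghat agrees with delta at every step then
   both runs coincide and only hhat can err on the true final state, otherwise
   ghat erred at some step t, which is charged to L_{P_t}(ghat). *)

Lemma sum_tuple0 (V : nmodType) (A : finType) (G : seq A -> V) :
  \sum_(x : 0.-tuple A) G x = G [::].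
Proof.
rewrite (eq_bigr (fun=> G [::])) => [|x _]; last by rewrite tuple0.
by rewrite sumr_const card_tuple expn0.
Qed.

Lemma sum_tuple_cons (V : nmodType) (A : finType) n (G : seq A -> V) :
  \sum_(x : n.+1.-tuple A) G x = \sum_(a : A) \sum_(x : n.-tuple A) G (a :: x).
Proof.
rewrite pair_big /=.
rewrite (reindex (fun p : A * n.-tuple A => [tuple of p.1 :: p.2])) //.
exists (fun x : n.+1.-tuple A => (thead x, behead_tuple x)).
- by case=> a x _; congr pair; apply/val_inj.
- by move=> [[|b x] //= ?] _; apply/val_inj.
Qed.

Lemma sum_eq_natr_mul (R : semiRingType) (A : finType) (a : A) (X : A -> R) :
  \sum_(u : A) (u == a)%:R * X u = X a.
Proof.
rewrite (bigD1 a) //= eqxx mul1r big1 ?addr0 // => u /negPf ->.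
by rewrite mul0r.
Qed.

Lemma natr_bool_in01 (R : numDomainType) (b : bool) : 0 <= (b%:R : R) <= 1.
Proof. by case: b; rewrite ?ler01 ?lexx. Qed.

Lemma TV_ge0 (R : realFieldType) (A : finType) (mu nu : A -> R) : 0 <= TV mu nu.
Proof. by apply: sumr_ge0 => a _; apply: normr_ge0. Qed.

Lemma sum_mul_diff_le_TV (R : realFieldType) (A : finType) (mu nu w : A -> R) :
  (forall a, 0 <= w a <= 1) ->
  \sum_a nu a * w a - \sum_a mu a * w a <= TV mu nu.
Proof.
move=> w01; rewrite -sumrB; apply: ler_sum => a _.
have /andP[w0 w1] := w01 a.
rewrite -mulrBl distrC; apply: le_trans (ler_norm _) _.
by rewrite normrM (ger0_norm w0) ler_piMr.
Qed.

Lemma TV_le_eps_max (R : realFieldType) (S Sigma : finType)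
    (P Q : S -> Sigma -> R) (s : S) :
  TV (P s) (Q s) <= eps_max P Q.
Proof. by rewrite /eps_max (bigD1 s) //= le_max lexx. Qed.

Section WordDistribution.
Variables (R : realFieldType) (S Sigma : finType) (delta : S -> Sigma -> S).
Implicit Types (K : S -> Sigma -> R) (G : seq Sigma -> R) (X : S -> R).

Definition word_expect K n s G :=
  \sum_(x : n.-tuple Sigma) word_prob delta K s x * G x.

Lemma word_expect0 K s G : word_expect K 0 s G = G [::].
Proof.
by rewrite /word_expect (sum_tuple0 (fun x => word_prob delta K s x * G x)) mul1r.
Qed.

Lemma word_expectS K n s G :
  word_expect K n.+1 s G
  = \sum_a K s a * word_expect K n (delta s a) (fun x => G (a :: x)).
Proof.
rewrite /word_expect (sum_tuple_cons _ (fun x => word_prob delta K s x * G x)).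
apply: eq_bigr => a _.
by rewrite mulr_sumr; apply: eq_bigr => x _; rewrite mulrA.
Qed.

Lemma word_expect_in01 K n s G : is_cond_dist K ->
  (forall x, 0 <= G x <= 1) -> 0 <= word_expect K n s G <= 1.
Proof.
move=> hK; elim: n s G => [|n IH] s G G01; first by rewrite word_expect0.
have [K0 K1] := hK s.
have IHa a := IH (delta s a) (fun x => G (a :: x)) (fun x => G01 _).
rewrite word_expectS; apply/andP; split.
  by apply: sumr_ge0 => a _; case/andP: (IHa a) => ? _; apply: mulr_ge0.
rewrite -K1; apply: ler_sum => a _; case/andP: (IHa a) => _ ?.
by rewrite ler_piMr.
Qed.

Lemma word_expect_TV P Q (e : R) n s G :
  is_cond_dist P -> is_cond_dist Q -> (forall x, 0 <= G x <= 1) ->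
  (forall s, TV (P s) (Q s) <= e) ->
  word_expect Q n s G <= word_expect P n s G + n%:R * e.
Proof.
move=> hP hQ + hTV; elim: n s G => [|n IH] s G G01.
  by rewrite !word_expect0 mul0r addr0.
rewrite !word_expectS.
set wq := fun a => word_expect Q n (delta s a) (fun x => G (a :: x)).
set wp := fun a => word_expect P n (delta s a) (fun x => G (a :: x)).
have [Q0 Q1] := hQ s.
have le_wq : \sum_a Q s a * wq a <= \sum_a Q s a * (wp a + n%:R * e).
  apply: ler_sum => a _; rewrite ler_wpM2l //.
  by apply: IH => x; apply: G01.
have average_shift :
    \sum_a Q s a * (wp a + n%:R * e) = \sum_a Q s a * wp a + n%:R * e.
  by under eq_bigr do rewrite mulrDr; rewrite big_split -mulr_suml Q1 mul1r.
have swap_P : \sum_a Q s a * wp a - \sum_a P s a * wp a <= e.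
  apply: le_trans (hTV s); apply: sum_mul_diff_le_TV => a.
  by apply: word_expect_in01.
rewrite /= in le_wq average_shift swap_P *; rewrite mulrSr mulrDl mul1r; lra.
Qed.

Definition state_expect K t s X := \sum_(u : S) state_dist delta s K t u * X u.

Lemma state_dist_ge0 K t s u : is_cond_dist K -> 0 <= state_dist delta s K t u.
Proof.
move=> hK; elim: t u => [|t IH] u /=; first exact: ler0n.
apply: sumr_ge0 => v _; apply: sumr_ge0 => a _.
by rewrite mulr_ge0 ?ler0n // mulr_ge0 //; case: (hK v).
Qed.

Lemma state_expect_ge0 K t s X : is_cond_dist K -> (forall u, 0 <= X u) ->
  0 <= state_expect K t s X.
Proof.
by move=> hK X0; apply: sumr_ge0 => u _; rewrite mulr_ge0 ?state_dist_ge0.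
Qed.

Lemma state_expect0 K s X : state_expect K 0 s X = X s.
Proof. exact: sum_eq_natr_mul. Qed.

Lemma state_expectSr K t s X :
  state_expect K t.+1 s X
  = state_expect K t s (fun u => \sum_a K u a * X (delta u a)).
Proof.
rewrite /state_expect /=; under eq_bigr do rewrite mulr_suml.
rewrite exchange_big; apply: eq_bigr => u _; rewrite mulr_sumr.
under eq_bigr do rewrite mulr_suml; rewrite exchange_big; apply: eq_bigr => a _.
rewrite mulrA -(sum_eq_natr_mul (delta u a) X) mulr_sumr.
by apply: eq_bigr => v _; rewrite mulrA.
Qed.

Lemma state_expectSl K t s X :
  state_expect K t.+1 s X = \sum_a K s a * state_expect K t (delta s a) X.
Proof.
elim: t X => [|t IH] X; rewrite state_expectSr.
  by rewrite state_expect0; under [RHS]eq_bigr do rewrite state_expect0.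
by rewrite IH; under [RHS]eq_bigr do rewrite state_expectSr.
Qed.

Variables (F : {set S}) (g : S -> Sigma -> S) (h : S -> bool).

Definition trans_error K u := \sum_a K u a * (g u a != delta u a)%:R.

Definition accept_error u : R := (h u != (u \in F))%:R.

Lemma word_expect_mismatch_le P n s : is_cond_dist P ->
  word_expect P n s (fun x => (h (run g s x) != (run delta s x \in F))%:R)
  <= \sum_(t < n) state_expect P t s (trans_error P)
     + state_expect P n s accept_error.
Proof.
move=> hP; elim: n s => [|n IH] s.
  by rewrite word_expect0 big_ord0 add0r state_expect0.
have [P0 P1] := hP s.
rewrite word_expectS big_ord_recl state_expect0 state_expectSl.
under [X in _ <= _ + X + _]eq_bigr do rewrite state_expectSl.
rewrite exchange_big /= -addrA -big_split /=.
under [X in _ <= _ + X]eq_bigr do rewrite -mulr_sumr -mulrDr.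
rewrite {1}/trans_error -big_split /=.
apply: ler_sum => a _; rewrite -mulrDr ler_wpM2l //.
have [-> | _] := eqVneq (g s a) (delta s a); first by rewrite add0r IH.
have /andP[_ W1] := word_expect_in01 n (delta s a) hP (fun x =>
  natr_bool_in01 R (h (run g (g s a) x) != (run delta (delta s a) x \in F))).
apply: le_trans W1 _.
rewrite lerDl; apply: addr_ge0.
- apply: sumr_ge0 => t _; apply: state_expect_ge0 => // u.
  by apply: sumr_ge0 => b _; rewrite mulr_ge0 ?ler0n //; case: (hP u).
- by apply: state_expect_ge0 => // u; apply: ler0n.
Qed.

Lemma tilde_lossE P T s :
  tilde_loss delta s F P T g h
  = \sum_(t < T) state_expect P t s (trans_error P)
    + state_expect P T s accept_error.
Proof.
rewrite /tilde_loss big_add1 big_mkord; congr (_ + _); apply: eq_bigr => t _.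
apply: eq_bigr => u _; rewrite mulr_sumr.
by apply: eq_bigr => a _; rewrite mulrA.
Qed.

End WordDistribution.

Theorem theorem4p6 (R : realFieldType) (S Sigma : finType)
  (delta : S -> Sigma -> S) (s0 : S) (F : {set S}) (T : nat) (hT : (1 <= T)%N)
  (P Q : S -> Sigma -> R) (hP : is_cond_dist P) (hQ : is_cond_dist Q)
  (ghat : S -> Sigma -> S) (hhat : S -> bool) :
  loss_seq delta s0 F T Q (fhat s0 ghat hhat)
  <= tilde_loss delta s0 F P T ghat hhat + 2 * (T ^ 2)%:R * eps_max P Q.
Proof.
pose mismatch x : R := (hhat (run ghat s0 x) != (run delta s0 x \in F))%:R.
have Q_to_P : loss_seq delta s0 F T Q (fhat s0 ghat hhat)
    <= word_expect delta P T s0 mismatch + T%:R * eps_max P Q.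
  exact: word_expect_TV hP hQ (fun x => natr_bool_in01 R _) (TV_le_eps_max P Q).
have union_bound := word_expect_mismatch_le delta F ghat hhat T s0 hP.
have eps_ge0 : 0 <= eps_max P Q := le_trans (TV_ge0 _ _) (TV_le_eps_max P Q s0).
have T_le : T%:R * eps_max P Q <= 2 * (T ^ 2)%:R * eps_max P Q.
  by rewrite -natrM ler_wpM2r // ler_nat -mulnn mulnA leq_pmull // muln_gt0.
rewrite tilde_lossE; lra.
Qed.
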